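(* A liner $X$ with $|X|>2$ is hyper-Bolyai if and only if $X$ is $3$-long, hyperaffine, and $3$-ranked.
   Context: A liner is a set $X$ of points with a family of subsets called lines such that any two distinct points lie in a unique line and every line contains at least two points. For distinct $x,y$, $\overline{xy}$ is the line through them and $\overline{xx}:=\{x\}$. A set is flat if it contains $\overline{xy}$ for all its distinct points; $\overline A$ is the smallest flat containing $A$; the rank $\|A\|$ is the smallest cardinality of $B\subseteq X$ with $A\subseteq\overline B$; a plane is a flat of rank 3. A flat $A$ is subparallel to a flat $B$ if $A\subseteq\overline{\{a\}\cup B}$ for every $a\in A$; $A\parallel B$ means each is subparallel to the other. $X$ is hyper-Bolyai if for any plane $P\subseteq X$, concurrent (i.e. distinct and intersecting) lines $A,B\subseteq P$ and point $p\in P\setminus B$, there is a line $\Lambda$ with $p\in\Lambda$, $\Lambda\parallel B$ and $|\Lambda\cap A|=1$. $X$ is $3$-long if every line has at least $3$ points. $X$ is hyperaffine if for all $o,x,y\in X$ and $p\in\overline{xy}\setminus\overline{ox}$ there exists $u\in\overline{oy}$ with $\overline{up}\cap\overline{ox}=\varnothing$. $X$ is $3$-ranked if any flats $A\subseteq B$ with $\|A\|=\|B\|\le3$ are equal. *)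

From Stdlib Require Import List.
Import ListNotations.

Section Liners.
Variable X : Type.
Variable is_line : (X -> Prop) -> Prop.

Definition subset (A B : X -> Prop) := forall z, A z -> B z.

Definition is_liner : Prop :=
  (forall x y, x <> y -> exists L, is_line L /\ L x /\ L y) /\
  (forall x y L1 L2, x <> y -> is_line L1 -> is_line L2 ->
     L1 x -> L1 y -> L2 x -> L2 y -> forall z, L1 z <-> L2 z) /\
  (forall L, is_line L -> exists x y, x <> y /\ L x /\ L y).

(* \overline{xy}: the line through x,y if x <> y, and {x} if x = y *)
Definition lineThrough (x y : X) : X -> Prop :=
  fun z => z = x \/ (x <> y /\ exists L, is_line L /\ L x /\ L y /\ L z).

Definition flat (A : X -> Prop) : Prop :=
  forall x y, A x -> A y -> x <> y -> subset (lineThrough x y) A.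

Definition closure (A : X -> Prop) : X -> Prop :=
  fun z => forall F, flat F -> subset A F -> F z.

Definition of_list (B : list X) : X -> Prop := fun z => In z B.

Definition has_rank (A : X -> Prop) (n : nat) : Prop :=
  (exists B : list X, NoDup B /\ length B = n /\ subset A (closure (of_list B))) /\
  (forall B : list X, length B < n -> ~ subset A (closure (of_list B))).

Definition plane (P : X -> Prop) : Prop := flat P /\ has_rank P 3.

Definition subparallel (A B : X -> Prop) : Prop :=
  forall a, A a -> subset A (closure (fun z => z = a \/ B z)).

Definition parallel (A B : X -> Prop) : Prop :=
  subparallel A B /\ subparallel B A.

Definition concurrent (A B : X -> Prop) : Prop :=
  (exists z, A z /\ ~ B z \/ B z /\ ~ A z) /\ (exists z, A z /\ B z).

Definition hyper_Bolyai : Prop :=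
  forall P A B p, plane P -> is_line A -> is_line B ->
    subset A P -> subset B P -> concurrent A B -> P p -> ~ B p ->
    exists Lam, is_line Lam /\ Lam p /\ parallel Lam B /\
      exists z, (Lam z /\ A z) /\ forall w, Lam w /\ A w -> w = z.

Definition three_long : Prop :=
  forall L, is_line L -> exists a b c, L a /\ L b /\ L c /\
    a <> b /\ a <> c /\ b <> c.

Definition hyperaffine : Prop :=
  forall o x y p, lineThrough x y p -> ~ lineThrough o x p ->
    exists u, lineThrough o y u /\
      forall z, ~ (lineThrough u p z /\ lineThrough o x z).

Definition three_ranked : Prop :=
  forall A B, flat A -> flat B -> subset A B ->
    forall n, n <= 3 -> has_rank A n -> has_rank B n -> forall z, A z <-> B z.

End Liners.

(* The Bolyai line Λ through p is a line of the plane of p and B that misses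
   B; read in the plane of o, x, y this is hyperaffinity. If a line K = {a, b} had only two
   points, the Bolyai lines through the points of ap would force ap = {a, p} and bp = {b, p},
   so {a, b, p} would be a flat containing the parallel to K through p, which then meets K.
   For 3-rankedness, a point z of a plane outside a rank-3 flat F, off a line K2 of F, has a
   Bolyai line to K2 meeting another line of F; being subparallel to K2, it lies in F. By 3-rankedness a line of a plane P disjoint from B is parallel to B,
   since B together with any point off it spans P; hyperaffinity produces such a line through
   p meeting A exactly once, and 3-longness supplies the auxiliary point needed when p is on A. *)

From Stdlib Require Import List Classical Lia.
Import ListNotations.

Arguments subset {X}.
Arguments lineThrough {X} is_line x y _.
Arguments flat {X} is_line A.
Arguments closure {X} is_line A _.
Arguments of_list {X} B _.
Arguments has_rank {X} is_line A n.
Arguments plane {X} is_line P.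
Arguments subparallel {X} is_line A B.
Arguments parallel {X} is_line A B.
Arguments concurrent {X} A B.

Lemma not_subset_ex {T} (A B : T -> Prop) : ~ subset A B -> exists z, A z /\ ~ B z.
Proof.
  intros H. apply NNPP; intros Hno. apply H; intros z Az.
  apply NNPP; intros Bz. apply Hno; eauto.
Qed.

Lemma concurrent_intro {T} (A B : T -> Prop) o a :
  A o -> B o -> A a -> ~ B a -> concurrent A B.
Proof. intros Ao Bo Aa nBa. split; [exists a; left | exists o]; auto. Qed.

Section Liner.

Variable X : Type.
Variable is_line : (X -> Prop) -> Prop.
Hypothesis HX : is_liner X is_line.

Local Notation line := (lineThrough is_line).
Local Notation cl := (closure is_line).

(** * Lines *)

Lemma line_diag x z : line x x z <-> z = x.
Proof. unfold lineThrough; split; [intros [H|[H _]]; [auto|congruence] | auto]. Qed.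

Lemma line_l x y : line x y x.
Proof. left; reflexivity. Qed.

Lemma is_line_two_points K : is_line K -> exists x y, x <> y /\ K x /\ K y.
Proof. destruct HX as [_ [_ H]]; auto. Qed.

Lemma is_line_other_point K o : is_line K -> exists x, K x /\ x <> o.
Proof.
  intros HK. destruct (is_line_two_points K HK) as [x [y [Hxy [Kx Ky]]]].
  destruct (classic (x = o)) as [->|Hxo]; eauto.
Qed.

Lemma is_line_unique K L x y : x <> y -> is_line K -> is_line L ->
  K x -> K y -> L x -> L y -> forall z, K z <-> L z.
Proof.
  destruct HX as [_ [Huniq _]]. intros Hxy HK HL Kx Ky Lx Ly.
  exact (Huniq x y K L Hxy HK HL Kx Ky Lx Ly).
Qed.

Lemma line_eq_is_line K x y : x <> y -> is_line K -> K x -> K y ->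
  forall z, line x y z <-> K z.
Proof.
  intros Hxy HK Kx Ky z. split.
  - intros [->|[_ [L [HL [Lx [Ly Lz]]]]]]; [exact Kx|].
    apply (is_line_unique L K x y); auto.
  - intros Kz. right; split; [exact Hxy|]. exists K; auto.
Qed.

Lemma is_line_of_line x y : x <> y -> exists K, is_line K /\ forall z, K z <-> line x y z.
Proof.
  intros Hxy. destruct HX as [Hex _]. destruct (Hex x y Hxy) as [K [HK [Kx Ky]]].
  exists K; split; [exact HK|]. intros z; symmetry; apply line_eq_is_line; auto.
Qed.

Lemma line_r x y : line x y y.
Proof.
  destruct (classic (x = y)) as [->|Hxy]; [apply line_l|].
  destruct HX as [Hex _]. destruct (Hex x y Hxy) as [K [HK [Kx Ky]]].
  apply (line_eq_is_line K x y); auto.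
Qed.

Lemma line_of_points x y a b : a <> b -> line x y a -> line x y b ->
  forall z, line a b z <-> line x y z.
Proof.
  intros Hab Ha Hb. destruct (classic (x = y)) as [<-|Hxy].
  - apply line_diag in Ha; apply line_diag in Hb; congruence.
  - destruct (is_line_of_line x y Hxy) as [K [HK EK]]. intros z.
    rewrite (line_eq_is_line K a b Hab HK (proj2 (EK a) Ha) (proj2 (EK b) Hb)).
    apply EK.
Qed.

Lemma line_through_on_line x y q : x <> q -> line x y q ->
  forall z, line x q z <-> line x y z.
Proof. intros Hxq Hq. apply line_of_points; auto using line_l. Qed.

Lemma line_sym x y z : line x y z -> line y x z.
Proof.
  intros Hz. destruct (classic (x = y)) as [<-|Hxy]; [exact Hz|].
  apply (line_of_points x y y x); auto using line_l, line_r.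
Qed.

(** * Flats and closures *)

Lemma is_line_flat K : is_line K -> flat is_line K.
Proof. intros HK x y Kx Ky Hxy z Hz. apply (line_eq_is_line K x y); auto. Qed.

Lemma line_flat x y : flat is_line (line x y).
Proof. intros a b Ha Hb Hab z Hz. apply (line_of_points x y a b); auto. Qed.

Lemma flat_line_subset F a b : flat is_line F -> F a -> F b -> subset (line a b) F.
Proof.
  intros HF Fa Fb z Hz. destruct (classic (a = b)) as [<-|Hab].
  - apply line_diag in Hz; subst; exact Fa.
  - exact (HF a b Fa Fb Hab z Hz).
Qed.

Lemma flat_subset_of_line F K a b : flat is_line F -> F a -> F b ->
  (forall z, K z <-> line a b z) -> subset K F.
Proof. intros HF Fa Fb EK z Kz. apply (flat_line_subset F a b); auto. apply EK, Kz. Qed.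

Lemma closure_min F A : flat is_line F -> subset A F -> subset (cl A) F.
Proof. intros HF HA z Hz. exact (Hz F HF HA). Qed.

Lemma subset_closure A : subset A (cl A).
Proof. intros z Az F _ HA. exact (HA z Az). Qed.

Lemma closure_flat A : flat is_line (cl A).
Proof.
  intros x y Hx Hy Hxy z Hz F HF HA. exact (HF x y (Hx F HF HA) (Hy F HF HA) Hxy z Hz).
Qed.

Lemma closure_nil z : ~ cl (of_list []) z.
Proof. intros Hz. apply (Hz (fun _ => False)); [intros ? ? [] | intros ? []]. Qed.

(** * Rank three *)

Definition noncollinear a b c := a <> b /\ ~ line a b c.

Lemma noncollinear_of_line K a b p : is_line K -> K a -> K b -> a <> b -> ~ K p ->
  noncollinear a b p.
Proof.
  intros HK Ka Kb Hab nKp. split; [exact Hab|].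
  intros Hp. apply nKp, (line_eq_is_line K a b); auto.
Qed.

Lemma noncollinear_not_in_closure B a b c : length B < 3 -> noncollinear a b c ->
  ~ (cl (of_list B) a /\ cl (of_list B) b /\ cl (of_list B) c).
Proof.
  intros HB [Hab Hc] [Ha [Hb Hc']].
  assert (Hline : exists u v, subset (cl (of_list B)) (line u v)).
  { destruct B as [|u [|v [|? ?]]]; simpl in HB.
    - exfalso; exact (closure_nil a Ha).
    - exists u, u. apply closure_min; [apply line_flat|]. intros z [<-|[]]; apply line_l.
    - exists u, v. apply closure_min; [apply line_flat|].
      intros z [<-|[<-|[]]]; [apply line_l | apply line_r].
    - lia. }
  destruct Hline as [u [v Huv]]. apply Hc, (line_of_points u v a b); auto.
Qed.

Lemma has_rank3_intro F a b c : F a -> F b -> F c -> noncollinear a b c ->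
  subset F (cl (of_list [a; b; c])) -> has_rank is_line F 3.
Proof.
  intros Fa Fb Fc Hn HF. split.
  - exists [a; b; c]. split; [|split; [reflexivity | exact HF]].
    destruct Hn as [Hab Hc].
    assert (a <> c) by (intros <-; apply Hc, line_l).
    assert (b <> c) by (intros <-; apply Hc, line_r).
    repeat constructor; simpl; intuition.
  - intros B HB HFB. apply (noncollinear_not_in_closure B a b c HB Hn).
    repeat split; apply HFB; assumption.
Qed.

Lemma has_rank3_noncollinear F : has_rank is_line F 3 ->
  exists a b c, F a /\ F b /\ F c /\ noncollinear a b c.
Proof.
  intros [_ H].
  destruct (not_subset_ex _ _ (H [] ltac:(simpl; lia))) as [a [Fa _]].
  destruct (not_subset_ex _ _ (H [a] ltac:(simpl; lia))) as [b [Fb Hb]].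
  destruct (not_subset_ex _ _ (H [a; b] ltac:(simpl; lia))) as [c [Fc Hc]].
  exists a, b, c. repeat split; auto.
  - intros <-. apply Hb, subset_closure; left; reflexivity.
  - intros Hl. apply Hc. revert Hl. apply flat_line_subset; [apply closure_flat | |];
      apply subset_closure; simpl; auto.
Qed.

Lemma closure3_points a b c :
  cl (of_list [a; b; c]) a /\ cl (of_list [a; b; c]) b /\ cl (of_list [a; b; c]) c.
Proof. repeat split; apply subset_closure; simpl; tauto. Qed.

Lemma plane_closure3 a b c : noncollinear a b c -> plane is_line (cl (of_list [a; b; c])).
Proof.
  intros Hn. split; [apply closure_flat|].
  apply (has_rank3_intro _ a b c); try (apply subset_closure; simpl; tauto); auto.
  intros z Hz; exact Hz.
Qed.

Lemma flat_rank_le2_eq A B n : n <= 2 -> flat is_line A -> subset A B ->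
  has_rank is_line A n -> has_rank is_line B n -> subset B A.
Proof.
  intros Hn fA sAB [_ rA] [[l [_ [Hl SB]]] _] z Bz.
  destruct l as [|b [|b' [|? ?]]]; simpl in Hl; subst n.
  - exfalso; exact (closure_nil z (SB z Bz)).
  - destruct (not_subset_ex A _ (rA [] ltac:(simpl; lia))) as [a [Aa _]].
    assert (Hb : forall t, B t -> t = b).
    { intros t Bt. apply line_diag, (closure_min (line b b) (of_list [b])).
      - apply line_flat.
      - intros s [<-|[]]; apply line_l.
      - exact (SB t Bt). }
    rewrite (Hb z Bz), <- (Hb a (sAB a Aa)). exact Aa.
  - destruct (not_subset_ex A _ (rA [] ltac:(simpl; lia))) as [a1 [A1 _]].
    destruct (not_subset_ex A _ (rA [a1] ltac:(simpl; lia))) as [a2 [A2 Ha2]].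
    assert (Ha : a1 <> a2) by (intros <-; apply Ha2, subset_closure; left; reflexivity).
    assert (Bline : subset B (line b b')).
    { intros t Bt. apply (closure_min (line b b') (of_list [b; b'])).
      - apply line_flat.
      - intros s [<-|[<-|[]]]; [apply line_l | apply line_r].
      - exact (SB t Bt). }
    apply (flat_line_subset A a1 a2); auto.
    apply (line_of_points b b' a1 a2); auto.
  - lia.
Qed.

(** * Parallel lines *)

Lemma subparallel_meet_subset L B z : subparallel is_line L B -> is_line B ->
  L z -> B z -> subset L B.
Proof.
  intros HP HB Lz Bz w Lw. apply (closure_min B (fun t => t = z \/ B t)).
  - apply is_line_flat, HB.
  - intros t [->|Ht]; auto.
  - exact (HP z Lz w Lw).
Qed.

Definition Bolyai_line (A B : X -> Prop) p Lam :=
  is_line Lam /\ Lam p /\ parallel is_line Lam B /\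
  exists z, (Lam z /\ A z) /\ forall w, Lam w /\ A w -> w = z.

Section Backward.

Hypothesis Hlong : three_long X is_line.
Hypothesis Haff : hyperaffine X is_line.
Hypothesis Hrank : three_ranked X is_line.

Lemma disjoint_subparallel P K1 K2 : plane is_line P -> is_line K1 -> is_line K2 ->
  subset K1 P -> subset K2 P -> (forall z, K1 z -> K2 z -> False) ->
  subparallel is_line K1 K2.
Proof.
  intros [fP rP] H1 H2 S1 S2 D l Kl.
  destruct (is_line_two_points K2 H2) as [b1 [b2 [Hb [B1 B2]]]].
  assert (E2 : forall z, K2 z <-> line b1 b2 z)
    by (intros z; symmetry; apply line_eq_is_line; auto).
  set (F := cl (fun z => z = l \/ K2 z)).
  assert (HFP : subset F P) by (apply closure_min; [exact fP | intros z [->|Hz]; auto]).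
  assert (rF : has_rank is_line F 3).
  { apply (has_rank3_intro F b1 b2 l); try (apply subset_closure; auto; fail).
    - apply (noncollinear_of_line K2); auto. intros K2l. exact (D l Kl K2l).
    - apply closure_min; [apply closure_flat|].
      intros z [->|Hz]; [apply subset_closure; simpl; tauto|].
      apply (flat_subset_of_line _ K2 b1 b2); auto; [apply closure_flat | |];
        apply subset_closure; simpl; tauto. }
  intros z Hz. apply (Hrank F P (closure_flat _) fP HFP 3 (le_n 3) rF rP z), S1, Hz.
Qed.

Lemma third_point x p : x <> p -> exists y, line x p y /\ y <> x /\ y <> p.
Proof.
  intros Hxp. destruct (is_line_of_line x p Hxp) as [K [HK EK]].
  destruct (Hlong K HK) as [a1 [a2 [a3 [K1 [K2 [K3 [D12 [D13 D23]]]]]]]].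
  assert (Hy : exists y, K y /\ y <> x /\ y <> p).
  { destruct (classic (a1 = x \/ a1 = p)) as [H1|H1]; [|exists a1; tauto].
    destruct (classic (a2 = x \/ a2 = p)) as [H2|H2]; [|exists a2; tauto].
    exists a3. split; [exact K3|].
    destruct H1 as [-> | ->], H2 as [-> | ->]; split; congruence. }
  destruct Hy as [y [Ky Hy]]. exists y. split; [apply EK, Ky | exact Hy].
Qed.

Section Configuration.

Variables (P A B : X -> Prop) (o p : X).
Hypotheses (HP : plane is_line P) (HA : is_line A) (HB : is_line B).
Hypotheses (SA : subset A P) (SB : subset B P).
Hypotheses (Ao : A o) (Bo : B o) (HAB : forall z, A z -> B z -> z = o).
Hypotheses (Pp : P p) (nBp : ~ B p).

Lemma Bolyai_line_of_disjoint u c : u <> p -> P u ->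
  (forall z, ~ (line u p z /\ B z)) -> line u p c -> A c ->
  exists Lam, Bolyai_line A B p Lam.
Proof.
  intros Hup Pu Dis Lc Ac.
  destruct (is_line_of_line u p Hup) as [K [HK EK]].
  assert (SK : subset K P) by (apply (flat_subset_of_line P K u p); auto; apply HP).
  assert (DK : forall z, K z -> B z -> False)
    by (intros z Kz Bz; apply (Dis z); split; [apply EK, Kz | exact Bz]).
  exists K. split; [exact HK|]. split; [apply EK, line_r|]. split.
  - split; apply (disjoint_subparallel P); auto. intros z Bz Kz; exact (DK z Kz Bz).
  - exists c. split; [split; [apply EK, Lc | exact Ac]|].
    intros w [Kw Aw]. apply NNPP; intros Hwc.
    apply (DK o); [|exact Bo].
    apply (is_line_unique A K w c); auto. apply EK, Lc.
Qed.

Lemma Bolyai_line_through_A : A p -> exists Lam, Bolyai_line A B p Lam.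
Proof.
  intros Ap.
  assert (Hpo : p <> o) by (intros ->; exact (nBp Bo)).
  destruct (is_line_other_point B o HB) as [x [Bx Hxo]].
  assert (Hxp : x <> p) by (intros ->; exact (nBp Bx)).
  assert (EB : forall z, B z <-> line o x z)
    by (intros z; symmetry; apply line_eq_is_line; auto).
  destruct (third_point x p Hxp) as [y [Hy [Hyx Hyp]]].
  assert (Hxyp : line x y p)
    by (apply (line_through_on_line x p y (not_eq_sym Hyx) Hy p), line_r).
  assert (Hnp : ~ line o x p) by (intros H; apply nBp, EB, H).
  destruct (Haff o x y p Hxyp Hnp) as [u [Hu Dis]].
  assert (Py : P y) by (apply (flat_line_subset P x p); auto; apply HP).
  assert (Pu : P u) by (apply (flat_line_subset P o y); auto; apply HP).
  (* u = p would put y, hence x, on the line op = A *)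
  assert (Hup : u <> p).
  { intros ->. destruct (classic (o = y)) as [<-|Hoy].
    - apply line_diag in Hu. exact (Hpo Hu).
    - assert (Ay : A y).
      { apply (line_eq_is_line A o p); auto.
        apply (line_through_on_line o y p); auto using line_r. }
      assert (Ax : A x).
      { apply (flat_line_subset A y p (is_line_flat A HA) Ay Ap).
        apply (line_of_points x p y p); auto using line_l, line_r. }
      exact (Hxo (HAB x Ax Bx)). }
  apply (Bolyai_line_of_disjoint u p); auto using line_r.
  intros z [Hz Bz]. apply (Dis z). split; [exact Hz | apply EB, Bz].
Qed.

Lemma Bolyai_line_off_A : ~ A p -> exists Lam, Bolyai_line A B p Lam.
Proof.
  intros nAp.
  destruct (is_line_other_point A o HA) as [z [Az Hzo]].
  assert (Hzp : z <> p) by (intros ->; exact (nAp Az)).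
  destruct (classic (exists x, line z p x /\ B x)) as [[x [Hx Bx]]|Hno].
  - assert (Hxo : x <> o).
    { intros ->. apply nAp, (line_eq_is_line A z o); auto.
      apply (line_through_on_line z p o); auto using line_r. }
    assert (Hxz : x <> z) by (intros ->; exact (Hzo (HAB z Az Bx))).
    assert (Hxzp : line x z p) by (apply (line_of_points z p x z); auto using line_l, line_r).
    assert (EB : forall t, B t <-> line o x t)
      by (intros t; symmetry; apply line_eq_is_line; auto).
    assert (Hnp : ~ line o x p) by (intros H; apply nBp, EB, H).
    destruct (Haff o x z p Hxzp Hnp) as [u [Hu Dis]].
    assert (Au : A u) by (apply (line_eq_is_line A o z); auto).
    apply (Bolyai_line_of_disjoint u u); auto using line_l.
    + intros ->; exact (nAp Au).
    + intros t [Ht Bt]. apply (Dis t). split; [exact Ht | apply EB, Bt].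
  - apply (Bolyai_line_of_disjoint z z); auto using line_l.
    intros t [Ht Bt]. apply Hno. exists t; auto.
Qed.

End Configuration.

Lemma hyper_Bolyai_of_three_long_hyperaffine_three_ranked : hyper_Bolyai X is_line.
Proof.
  intros P A B p HP HA HB SA SB [[w Hw] [o [Ao Bo]]] Pp nBp.
  change (exists Lam, Bolyai_line A B p Lam).
  assert (HAB : forall z, A z -> B z -> z = o).
  { intros z Az Bz. apply NNPP; intros Hzo.
    destruct Hw as [[Aw nBw]|[Bw nAw]]; [apply nBw | apply nAw];
      apply (is_line_unique A B z o); auto. }
  destruct (classic (A p)) as [Ap|nAp].
  - apply (Bolyai_line_through_A P A B o p); auto.
  - apply (Bolyai_line_off_A P A B o p); auto.
Qed.

End Backward.

Section Forward.

Hypothesis HBol : hyper_Bolyai X is_line.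

Lemma hyperaffine_of_hyper_Bolyai : hyperaffine X is_line.
Proof.
  intros o x y p Hp Hnp.
  destruct (classic (line o y p)) as [Hoyp|Hnoyp].
  { exists p. split; [exact Hoyp|]. intros z [Hz Hz'].
    apply line_diag in Hz; subst. exact (Hnp Hz'). }
  assert (Hox : o <> x) by (intros <-; exact (Hnoyp Hp)).
  assert (Hoy : o <> y) by (intros <-; exact (Hnp (line_sym _ _ _ Hp))).
  assert (Hn : noncollinear o x y).
  { split; [exact Hox|]. intros H. apply Hnp.
    exact (flat_line_subset _ x y (line_flat o x) (line_r o x) H p Hp). }
  pose proof (plane_closure3 o x y Hn) as HP.
  set (P := cl (of_list [o; x; y])) in *.
  destruct (closure3_points o x y) as [Po [Px Py]].
  destruct (is_line_of_line o y Hoy) as [A [HA EA]].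
  destruct (is_line_of_line o x Hox) as [B [HB EB]].
  destruct (HBol P A B p HP HA HB) as [L [HL [Lp [[Par _] [c [[Lc Ac] _]]]]]].
  - apply (flat_subset_of_line P A o y); auto; apply HP.
  - apply (flat_subset_of_line P B o x); auto; apply HP.
  - apply (concurrent_intro A B o y); try (apply EA || apply EB); auto using line_l, line_r.
    intros By. apply Hn, EB, By.
  - apply (flat_line_subset P x y); auto; apply HP.
  - intros Bp. apply Hnp, EB, Bp.
  - exists c. split; [apply EA, Ac|].
    assert (Hcp : c <> p) by (intros ->; apply Hnoyp, EA, Ac).
    intros z [Hz Bz].
    assert (Lz : L z) by (apply (line_eq_is_line L c p); auto).
    apply Hnp, EB, (subparallel_meet_subset L B z Par HB Lz); [apply EB, Bz | exact Lp].
Qed.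

Section TwoPointLine.

Variables (K : X -> Prop) (a b : X).
Hypotheses (HK : is_line K) (Ka : K a) (Kb : K b) (Hab : a <> b).
Hypothesis HK2 : forall z, K z -> z = a \/ z = b.

Lemma two_point_line_joins_two_point a' b' p : K a' -> K b' -> a' <> b' -> ~ K p ->
  forall q, line a' p q -> q = a' \/ q = p.
Proof.
  intros Ka' Kb' Ha'b' nKp q Hq. apply NNPP; intros Hn. apply not_or_and in Hn as [Hqa Hqp].
  assert (HK2' : forall z, K z -> z = a' \/ z = b').
  { intros z Kz. destruct (HK2 z Kz), (HK2 a' Ka'), (HK2 b' Kb'); subst; tauto. }
  assert (EK : forall z, K z <-> line a' b' z)
    by (intros z; symmetry; apply line_eq_is_line; auto).
  pose proof (noncollinear_of_line K a' b' p HK Ka' Kb' Ha'b' nKp) as Hn.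
  pose proof (plane_closure3 a' b' p Hn) as HP.
  set (P := cl (of_list [a'; b'; p])) in *.
  assert (fP : flat is_line P) by apply HP.
  destruct (closure3_points a' b' p) as [Pa [Pb Pp]].
  assert (Hbp : b' <> p) by (intros ->; exact (nKp Kb')).
  destruct (is_line_of_line b' p Hbp) as [M [HM EM]].
  assert (nMa : ~ M a').
  { intros Ma. apply nKp, EK, line_sym, (line_through_on_line b' p a'); auto using line_r.
    apply EM, Ma. }
  assert (nMq : ~ M q).
  { intros Mq. apply nMa, EM, (line_of_points b' p q p); auto using line_r.
    - apply EM, Mq.
    - apply (line_of_points a' p q p); auto using line_l, line_r. }
  destruct (HBol P K M q HP HK HM) as [L [HL [Lq [[Par _] [c [[Lc Kc] _]]]]]].
  - apply (flat_subset_of_line P K a' b'); auto.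
  - apply (flat_subset_of_line P M b' p); auto.
  - apply (concurrent_intro K M b' a'); auto. apply EM, line_l.
  - exact (flat_line_subset P a' p fP Pa Pp q Hq).
  - exact nMq.
  (* L meets M, at p if c = a' (as L then contains the line a'q) and at b' otherwise *)
  - apply nMq. destruct (HK2' c Kc) as [-> | ->].
    + assert (Lp : L p).
      { apply (line_eq_is_line L a' q); auto.
        apply (line_through_on_line a' p q); auto using line_r. }
      apply (subparallel_meet_subset L M p Par HM Lp); [apply EM, line_r | exact Lq].
    + apply (subparallel_meet_subset L M b' Par HM Lc); [apply EM, line_l | exact Lq].
Qed.

Lemma two_point_line_triangle_flat p : ~ K p -> flat is_line (fun z => z = a \/ z = b \/ z = p).
Proof.
  intros nKp.
  assert (EK : forall z, K z <-> line a b z)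
    by (intros z; symmetry; apply line_eq_is_line; auto).
  pose proof (two_point_line_joins_two_point a b p Ka Kb Hab nKp) as Ca.
  pose proof (two_point_line_joins_two_point b a p Kb Ka (not_eq_sym Hab) nKp) as Cb.
  intros x y Sx Sy Hxy z Hz.
  destruct Sx as [->|[->| ->]]; destruct Sy as [->|[->| ->]]; try congruence.
  - apply EK, HK2 in Hz. tauto.
  - apply Ca in Hz. tauto.
  - apply line_sym, EK, HK2 in Hz. tauto.
  - apply Cb in Hz. tauto.
  - apply line_sym, Ca in Hz. tauto.
  - apply line_sym, Cb in Hz. tauto.
Qed.

Lemma two_point_line_full p : K p.
Proof.
  apply NNPP; intros nKp.
  pose proof (two_point_line_triangle_flat p nKp) as fS.
  set (S := fun z => z = a \/ z = b \/ z = p) in fS.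
  pose proof (noncollinear_of_line K a b p HK Ka Kb Hab nKp) as Hn.
  pose proof (plane_closure3 a b p Hn) as HP.
  set (P := cl (of_list [a; b; p])) in *.
  assert (fP : flat is_line P) by apply HP.
  destruct (closure3_points a b p) as [Pa [Pb Pp]].
  assert (Hap : a <> p) by (intros ->; exact (nKp Ka)).
  destruct (is_line_of_line a p Hap) as [A [HA EA]].
  destruct (HBol P A K p HP HA HK) as [L [HL [Lp [[Par _] _]]]].
  - apply (flat_subset_of_line P A a p); auto.
  - apply (flat_subset_of_line P K a b); auto.
    intros z; symmetry; apply line_eq_is_line; auto.
  - apply (concurrent_intro A K a p); auto; apply EA; auto using line_l, line_r.
  - exact Pp.
  - exact nKp.
  - assert (SL : subset L S).
    { intros t Lt. apply (closure_min S (fun t => t = p \/ K t)); auto.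
      - intros s [->|Ks]; unfold S; [tauto|]. destruct (HK2 s Ks); tauto.
      - exact (Par p Lp t Lt). }
    destruct (is_line_other_point L p HL) as [d [Ld Hdp]].
    assert (Kd : K d) by (destruct (SL d Ld) as [->|[->| ->]]; auto; congruence).
    exact (nKp (subparallel_meet_subset L K d Par HK Ld Kd p Lp)).
Qed.

End TwoPointLine.

Lemma three_long_of_hyper_Bolyai :
  (exists a b c : X, a <> b /\ a <> c /\ b <> c) -> three_long X is_line.
Proof.
  intros H3 K HK.
  destruct (is_line_two_points K HK) as [a [b [Hab [Ka Kb]]]].
  destruct (classic (exists c, K c /\ c <> a /\ c <> b)) as [[c [Kc [Hca Hcb]]]|Hno].
  - exists a, b, c. repeat split; auto; congruence.
  - assert (HK2 : forall z, K z -> z = a \/ z = b).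
    { intros z Kz. apply NNPP; intros Hz. apply not_or_and in Hz as [Hza Hzb].
      apply Hno. exists z; auto. }
    destruct H3 as [x [y [z Hxyz]]]. exists x, y, z.
    repeat split; try apply (two_point_line_full K a b); tauto.
Qed.

Lemma flat_in_plane_eq P F a1 a2 a3 : plane is_line P -> flat is_line F -> subset F P ->
  F a1 -> F a2 -> F a3 -> noncollinear a1 a2 a3 -> subset P F.
Proof.
  intros HP fF SFP F1 F2 F3 [H12 H3] z Pz.
  assert (H13 : a1 <> a3) by (intros <-; apply H3, line_l).
  destruct (is_line_of_line a1 a2 H12) as [K1 [HK1 E1]].
  destruct (is_line_of_line a1 a3 H13) as [K2 [HK2 E2]].
  assert (S1 : subset K1 F) by (apply (flat_subset_of_line F K1 a1 a2); auto).
  assert (S2 : subset K2 F) by (apply (flat_subset_of_line F K2 a1 a3); auto).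
  destruct (classic (K2 z)) as [K2z|nK2z]; [exact (S2 z K2z)|].
  destruct (HBol P K1 K2 z HP HK1 HK2) as [L [HL [Lz [[Par _] [c [[Lc K1c] _]]]]]].
  - intros t Kt; exact (SFP t (S1 t Kt)).
  - intros t Kt; exact (SFP t (S2 t Kt)).
  - apply (concurrent_intro K1 K2 a1 a2); try (apply E1 || apply E2); auto using line_l, line_r.
    intros K2a2. apply H3, (line_of_points a1 a3 a1 a2); auto using line_l, line_r.
    apply E2, K2a2.
  - exact Pz.
  - exact nK2z.
  - apply (closure_min F (fun t => t = c \/ K2 t)); auto.
    + intros t [->|Ht]; auto.
    + exact (Par c Lc z Lz).
Qed.

Lemma three_ranked_of_hyper_Bolyai : three_ranked X is_line.
Proof.
  intros A B fA fB sAB n Hn rA rB z. split; [apply sAB|]. revert z.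
  assert (Hn' : n <= 2 \/ n = 3) by lia.
  destruct Hn' as [Hle | ->].
  - exact (flat_rank_le2_eq A B n Hle fA sAB rA rB).
  - destruct (has_rank3_noncollinear A rA) as [a1 [a2 [a3 [A1 [A2 [A3 Hnc]]]]]].
    apply (flat_in_plane_eq B A a1 a2 a3); auto. split; assumption.
Qed.

End Forward.

End Liner.

Theorem theorem6p9p5 (X : Type) (is_line : (X -> Prop) -> Prop)
  (HX : is_liner X is_line)
  (H3 : exists a b c : X, a <> b /\ a <> c /\ b <> c) :
  hyper_Bolyai X is_line <->
  three_long X is_line /\ hyperaffine X is_line /\ three_ranked X is_line.
Proof.
  split.
  - intros HBol. split; [|split].
    + apply three_long_of_hyper_Bolyai; assumption.
    + apply hyperaffine_of_hyper_Bolyai; assumption.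
    + apply three_ranked_of_hyper_Bolyai; assumption.
  - intros [Hlong [Haff Hrank]].
    apply hyper_Bolyai_of_three_long_hyperaffine_three_ranked; assumption.
Qed.
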